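(* Let $n$ be a positive integer, let $\theta=\lambda/\mu$ be a skew Young diagram such that every column of $\theta$ contains at most $n$ boxes, and let $\beta$ be a nonzero complex number. Then $$G_\theta(\beta,\dots,\beta\mid -\beta^{-1})=\beta^{|\theta|},$$ where all $n$ variables are specialized to $\beta$.
   Context: Partitions are identified with Young diagrams $\{(i,j)\in\mathbb{Z}_{>0}^2 : j\le\lambda_i\}$ (row index $i$ increasing downward). For partitions $\mu\subseteq\lambda$, $\theta=\lambda/\mu=\lambda\setminus\mu$ and $|\theta|$ is its number of boxes. A set-valued tableau of shape $\theta$ with entries in $[n]=\{1,\dots,n\}$ assigns a non-empty subset $T_{i,j}\subseteq[n]$ to each box $(i,j)\in\theta$ such that $\max T_{i,j}\le\min T_{i,j+1}$ whenever $(i,j),(i,j+1)\in\theta$ and $\max T_{i,j}<\min T_{i+1,j}$ whenever $(i,j),(i+1,j)\in\theta$; $\mathrm{SVT}(\theta,n)$ is the set of these. For such $T$, $|T|=\sum_{(i,j)\in\theta}|T_{i,j}|$, $\omega_k(T)$ is the number of boxes whose set contains $k$, and $x^{\omega(T)}=\prod_{k=1}^n x_k^{\omega_k(T)}$. The skew Grothendieck polynomial is $G_\theta(x_1,\dots,x_n\mid\beta)=\sum_{T\in\mathrm{SVT}(\theta,n)}\beta^{|T|-|\theta|}x^{\omega(T)}$. *)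

From HB Require Import structures.
From mathcomp Require Import all_boot all_order all_algebra.
From mathcomp Require Import reals complex.
Set Implicit Arguments. Unset Strict Implicit. Unset Printing Implicit Defensive.
Import Order.TTheory GRing.Theory Num.Theory.
Local Open Scope ring_scope.

Definition is_partition (lam : seq nat) : bool :=
  sorted geq lam && all (fun k => 0 < k)%N lam.

Definition subpartition (mu lam : seq nat) : bool :=
  all (fun i => nth 0 mu i <= nth 0 lam i)%N (iota 0 (size mu)).

(* 0-indexed box (i,j) (i.e. the paper's (i+1,j+1)) lies in lam/mu *)
Definition inskew (lam mu : seq nat) (i j : nat) : bool :=
  (j < nth 0 lam i)%N && ~~ (j < nth 0 mu i)%N.

Definition box (lam : seq nat) : finType :=
  ('I_(size lam) * 'I_(\max_(k <- lam) k))%type.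

Definition inth (lam mu : seq nat) (b : box lam) : bool := inskew lam mu b.1 b.2.

Definition skew_size (lam mu : seq nat) : nat := #|[set b : box lam | inth mu b]|.

Definition col_count (lam mu : seq nat) (j : nat) : nat :=
  count (fun i => inskew lam mu i j) (iota 0 (size lam)).

(* Fillings: each box gets a subset of [n] (encoded as 'I_n, k <-> k+1). *)
Definition filling (n : nat) (lam : seq nat) : finType :=
  {ffun box lam -> {set 'I_n}}.

Definition smax n (A : {set 'I_n}) : nat := \max_(k in A) (k : nat).
Definition smin n (A : {set 'I_n}) : nat := \big[minn/n]_(k in A) (k : nat).

(* Set-valued tableau of shape lam/mu with entries in [n]: nonempty sets on
   boxes of theta (empty outside theta), weak increase along rows, strict
   increase down columns (max/min conditions). *)
Definition is_SVT n (lam mu : seq nat) (T : filling n lam) : bool :=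
  [forall b, (T b != set0) == inth mu b] &&
  [forall b, forall b',
     (inth mu b && inth mu b' && (b'.1 == b.1 :> nat) && (b'.2 == b.2.+1 :> nat))
       ==> (smax (T b) <= smin (T b'))%N] &&
  [forall b, forall b',
     (inth mu b && inth mu b' && (b'.1 == b.1.+1 :> nat) && (b'.2 == b.2 :> nat))
       ==> (smax (T b) < smin (T b'))%N].

Definition tsize n lam (T : filling n lam) : nat := \sum_(b : box lam) #|T b|.
Definition omega n lam (T : filling n lam) (k : 'I_n) : nat :=
  #|[set b : box lam | k \in T b]|.

(* Skew Grothendieck polynomial evaluated at x_1..x_n := x 0 .. x (n-1). *)
Definition Groth (F : comPzRingType) (n : nat) (lam mu : seq nat)
    (x : 'I_n -> F) (beta : F) : F :=
  \sum_(T : filling n lam | is_SVT mu T)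
     beta ^+ (tsize T - skew_size lam mu) * \prod_(k : 'I_n) x k ^+ omega T k.

(* Specialising every x_k to beta and the parameter to -1/beta turns G_theta into
   beta^|theta| times the signed count of set-valued tableaux
   sum_T (-1)^(|T| - |theta|), so it suffices to show that this count is 1.
   Fix the minima m(b) := min T_b of all boxes.  The tableau conditions then
   decouple: T_b may be any set with minimum m(b) whose maximum M is admissible,
   i.e. M <= m(right neighbour) and M < m(lower neighbour).  Admissibility is
   downward closed, so these sets are m(b) together with any subset of the
   admissible values above m(b); their signed sum is therefore 1 if m(b) is the
   largest admissible value below n, and 0 otherwise.  Hence the signed count is
   the number of maps m that are maximal at every box, and the column bound
   forces the unique such map m(b) = n - 1 - #{boxes of theta below b in its
   column}. *)

From Pilot Require Import Defs.
From HB Require Import structures.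
From mathcomp Require Import all_boot all_order all_algebra.
From mathcomp Require Import reals complex.
From mathcomp Require Import zify.
Import Order.TTheory GRing.Theory Num.Theory.
Set Implicit Arguments. Unset Strict Implicit. Unset Printing Implicit Defensive.

Lemma partition_nth_le (s : seq nat) i i' : is_partition s -> (i <= i')%N ->
  (nth 0 s i' <= nth 0 s i)%N.
Proof.
move=> /andP[s_sorted _] le_ii'.
have [lt_i's|] := ltnP i' (size s); last by move=> ?; rewrite nth_default.
by apply: (sorted_leq_nth (fun _ _ _ h1 h2 => leq_trans h2 h1) leqnn);
  rewrite ?inE ?(leq_ltn_trans le_ii').
Qed.

Section ColumnDepth.
Variables lam mu : seq nat.

Lemma inskew_lt_size i j : inskew lam mu i j -> (i < size lam)%N.
Proof. by case/andP=> + _; apply: contraTT; rewrite -!leqNgt => /(nth_default 0)->. Qed.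

Lemma inskew_lt_max i j : inskew lam mu i j -> (j < \max_(k <- lam) k)%N.
Proof.
move=> ij_in; have /andP[j_lt _] := ij_in; apply: (leq_trans j_lt).
by apply: (@leq_bigmax_seq _ _ xpredT id) => //; apply: mem_nth (inskew_lt_size ij_in).
Qed.

Lemma box_eq (b1 b2 : box lam) : (b1.1 : nat) = b2.1 -> (b1.2 : nat) = b2.2 -> b1 = b2.
Proof. by case: b1 b2 => [i1 j1] [i2 j2] /= /ord_inj-> /ord_inj->. Qed.

Lemma box_of_inskew i j : inskew lam mu i j ->
  exists b : box lam, [/\ (b.1 : nat) = i, (b.2 : nat) = j & inth mu b].
Proof.
by move=> ij_in; exists (Ordinal (inskew_lt_size ij_in), Ordinal (inskew_lt_max ij_in)).
Qed.

Definition col_depth i j : nat := \sum_(i.+1 <= k < size lam) inskew lam mu k j.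

Lemma col_depthS i j : col_depth i j = (inskew lam mu i.+1 j + col_depth i.+1 j)%N.
Proof.
have [lt_iN | ge_iN] := ltnP i.+1 (size lam); first by rewrite /col_depth big_ltn.
have /negbTE-> : ~~ inskew lam mu i.+1 j.
  by apply: contraTN ge_iN => /inskew_lt_size; rewrite -ltnNge.
by rewrite /col_depth !big_geq // (leq_trans ge_iN).
Qed.

Lemma col_depth_lt n i j : (forall j, (col_count lam mu j <= n)%N) ->
  inskew lam mu i j -> (col_depth i j < n)%N.
Proof.
move=> col_le ij_in; apply: leq_trans (col_le j).
have -> : col_count lam mu j = \sum_(0 <= k < size lam) inskew lam mu k j.
  rewrite /col_count -sum1_count big_mkcond /index_iota subn0.
  by apply: eq_bigr => k _; case: ifP.
rewrite (@big_cat_nat _ _ _ i.+1) ?(inskew_lt_size ij_in) //= big_nat_recr //= ij_in.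
by rewrite addn1 addSn ltnS leq_addl.
Qed.

Section Partitions.
Hypotheses (lam_part : is_partition lam) (mu_part : is_partition mu).

Lemma inskew_convex i1 j1 i2 j2 i j :
  inskew lam mu i1 j1 -> inskew lam mu i2 j2 ->
  (i1 <= i <= i2)%N -> (j1 <= j <= j2)%N -> inskew lam mu i j.
Proof.
move=> /andP[_ ge_j1] /andP[lt_j2 _] /andP[le_i1 le_i2] /andP[le_j1 le_j2].
rewrite /inskew -!leqNgt in ge_j1 *; apply/andP; split.
  exact: leq_ltn_trans le_j2 (leq_trans lt_j2 (partition_nth_le lam_part le_i2)).
exact: leq_trans (partition_nth_le mu_part le_i1) (leq_trans ge_j1 le_j1).
Qed.


Lemma col_depth_right i j : inskew lam mu i j -> (col_depth i j.+1 <= col_depth i j)%N.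
Proof.
move=> ij_in; rewrite /col_depth big_nat_cond [leqRHS]big_nat_cond.
apply: leq_sum => k /andP[/andP[lt_ik _] _].
case: (boolP (inskew lam mu k j.+1)) => // kj1_in.
suff -> : inskew lam mu k j by [].
by apply: (inskew_convex ij_in kj1_in); rewrite ?(ltnW lt_ik) ?leqnn ?leqnSn.
Qed.

Lemma col_depth_bottom i j : inskew lam mu i j -> ~~ inskew lam mu i.+1 j ->
  col_depth i j = 0%N.
Proof.
move=> ij_in i1j_out; rewrite /col_depth big_nat_cond big1 // => k /andP[/andP[lt_ik _] _].
apply/eqP; rewrite eqb0; apply: contra i1j_out => kj_in.
by apply: (inskew_convex ij_in kj_in); rewrite ?leqnn ?leqnSn.
Qed.
End Partitions.
End ColumnDepth.

Section SetExtremes.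
Variable n : nat.
Implicit Types (S : {set 'I_n}) (a k : 'I_n).

Lemma smin_le S k : k \in S -> (smin S <= k)%N.
Proof. by move=> kS; rewrite /smin -minEnat -leEnat; apply: bigmin_le_cond. Qed.

Lemma smin_lt S : S != set0 -> (smin S < n)%N.
Proof. by case/set0Pn=> k /smin_le/leq_ltn_trans->. Qed.

Lemma eq_smin S a : (smin S == a) = (a \in S) && [forall (k | k \in S), a <= k]%N.
Proof.
apply/eqP/andP => [min_a | [aS /forall_inP min_a]]; last first.
  apply/eqP; rewrite eqn_leq smin_le //=.
  by rewrite /smin -minEnat -leEnat; apply/bigmin_geP; split; [apply: ltnW|].
have S_neq0 : S != set0.
  by apply: contra_eqN min_a => /eqP->; rewrite /smin big_set0 neq_ltn ltn_ord orbT.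
have [k kS min_k] : exists2 k, k \in S & smin S = k.
  have [k0 k0S] := set0Pn _ S_neq0.
  rewrite /smin -minEnat.
  have [k kS ->] := @eq_bigmin _ _ _ n k0 (fun k => k \in S) (fun k => k : nat) k0S
    (fun k _ => ltnW (ltn_ord k)).
  by exists k.
have <- : k = a by apply: val_inj; rewrite /= -min_k.
by split=> //; apply/forall_inP => k' /smin_le; rewrite min_k.
Qed.

Lemma smax_le S k : k \in S -> (k <= smax S)%N.
Proof. exact: (leq_bigmax_cond (F := fun k : 'I_n => k : nat)). Qed.

Lemma smax_mem S : S != set0 -> exists2 k, k \in S & smax S = k.
Proof. by rewrite -card_gt0 => /(@eq_bigmax_cond _ _ (fun k : 'I_n => k : nat))[k]; exists k. Qed.

End SetExtremes.

Local Open Scope ring_scope.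

Lemma sum_subset_sign (R : pzRingType) (T : finType) (B : {set T}) :
  \sum_(U : {set T} | U \subset B) (-1) ^+ #|U| = (B == set0)%:R :> R.
Proof.
have [-> | [x xB]] := set_0Vmem B.
  by rewrite (eq_bigl _ _ (@subset0 T)) big_pred1_eq cards0 eqxx.
have /negbTE-> : B != set0 by apply/set0Pn; exists x.
pose tog (U : {set T}) := if x \in U then U :\ x else x |: U.
have togK : involutive tog.
  move=> U; rewrite /tog; have [xU | xNU] := boolP (x \in U).
    by rewrite setD11 setD1K.
  by rewrite setU11 setU1K.
rewrite (bigID (fun U : {set T} => x \in U)) /= [X in _ + X](reindex_inj (inv_inj togK)) /=.
rewrite [X in _ + X](eq_big (fun U : {set T} => (U \subset B) && (x \in U))
                            (fun U : {set T} => - (-1) ^+ #|U|)).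
- by rewrite sumrN subrr.
- move=> U; rewrite /tog; case: ifP => xU; rewrite ?setD11 ?setU11 ?andbT ?andbF //.
  by rewrite subDset (setUidPr _) // sub1set.
move=> U /andP[_]; rewrite /tog; case: ifP => [xU _ | _]; last by rewrite setU11.
by rewrite (cardsD1 x U) xU add1n exprS mulN1r opprK.
Qed.

Lemma prodr_natb (R : pzSemiRingType) (I : finType) (P : pred I) :
  \prod_(i : I) (P i)%:R = [forall i, P i]%:R :> R.
Proof.
have [P_all | /forallPn[i NPi]] := boolP [forall i, P i].
  by rewrite big1 // => i _; rewrite (forallP P_all).
by case/splitPr: (mem_index_enum i) => r1 r2; rewrite big_cat big_cons (negbTE NPi) /= mul0r mulr0.
Qed.

Section MinimumSets.
Variables (n : nat) (P : pred nat) (a : 'I_n).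
Hypothesis P_down : forall x y, (x <= y)%N -> P y -> P x.

Let B := [set k : 'I_n | (a < k)%N && P k].

Lemma sets_min_maxE (S : {set 'I_n}) :
  [&& S != set0, smin S == a & P (smax S)] = [&& P a, a \in S & S :\ a \subset B].
Proof.
apply/and3P/and3P => [[_ /[!eq_smin] /andP[aS /forall_inP min_aS] P_max] | ].
  split=> //; first exact: P_down (smax_le aS) P_max.
  apply/subsetP => k /setD1P[k_neq_a kS].
  by rewrite inE (P_down (smax_le kS) P_max) andbT ltn_neqAle min_aS // andbT eq_sym.
move=> [Pa aS /subsetP sub].
have S_mem k : k \in S -> (k == a) || (k \in B).
  by move=> kS; case: eqP => [|/eqP k_neq_a] //=; apply: sub; rewrite in_setD1 k_neq_a.
split.
- by apply/set0Pn; exists a.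
- rewrite eq_smin aS; apply/forall_inP => k /S_mem /orP[/eqP-> //|].
  by rewrite inE => /andP[/ltnW].
- have S_neq0 : S != set0 by apply/set0Pn; exists a.
  have [k kS ->] := smax_mem S_neq0.
  by case/orP: (S_mem k kS) => [/eqP-> // | ]; rewrite inE => /andP[].
Qed.

Lemma sum_sets_min_sign (R : pzRingType) :
  \sum_(S : {set 'I_n} | [&& S != set0, smin S == a & P (smax S)]) (-1) ^+ (#|S| - 1)
  = (P a && ~~ ((a.+1 < n)%N && P a.+1))%:R :> R.
Proof.
rewrite (eq_bigl _ _ sets_min_maxE).
rewrite (reindex_onto (fun U => a |: U) (fun S => S :\ a)) /=; last first.
  by move=> S /and3P[_ aS _]; rewrite setD1K.
have aNB : a \notin B by rewrite inE ltnn.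
rewrite (eq_bigl (fun U : {set 'I_n} => P a && (U \subset B))); last first.
  move=> U; rewrite setU11; have [aU | aNU] := boolP (a \in U).
    have /negbTE-> : ~~ (U \subset B) by apply: contra aNB => /subsetP; apply.
    have /negbTE-> : (a |: U) :\ a != U by apply: contraTneq aU => <-; rewrite setD11.
    by rewrite !andbF.
  by rewrite setU1K // eqxx !andbT.
rewrite (eq_bigr (fun U : {set 'I_n} => (-1) ^+ #|U|)); last first.
  move=> U /andP[_ /subsetP UB]; have aNU : a \notin U by apply: contra aNB => /UB.
  by rewrite cardsU1 aNU add1n subn1.
case: (P a); last by rewrite big_pred0.
rewrite /= sum_subset_sign -[B == set0]negbK; congr (~~ _)%:R.
apply/set0Pn/andP => [[k] | [lt_a1n Pa1]].
  rewrite inE => /andP[lt_ak Pk].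
  by split; [apply: leq_ltn_trans lt_ak (ltn_ord k) | apply: P_down lt_ak Pk].
by exists (Ordinal lt_a1n); rewrite inE /= ltnSn.
Qed.
End MinimumSets.

Section Minima.
Variables (n : nat) (lam mu : seq nat) (x0 : 'I_n).
Implicit Types (T : filling n lam) (m : {ffun box lam -> 'I_n}) (b : box lam).

Definition admissible (m : box lam -> nat) b (M : nat) : bool :=
  [forall b', (inth mu b' && (b'.1 == b.1 :> nat) && (b'.2 == b.2.+1 :> nat))
                ==> (M <= m b')%N] &&
  [forall b', (inth mu b' && (b'.1 == b.1.+1 :> nat) && (b'.2 == b.2 :> nat))
                ==> (M < m b')%N].

Lemma admissible_down (m : box lam -> nat) b M' M :
  (M' <= M)%N -> admissible m b M -> admissible m b M'.
Proof.
move=> le_M'M /andP[/forallP right /forallP below]; apply/andP; split; apply/forallP=> b'.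
  by apply: contraTT (right b') => /[!negb_imply] /andP[-> /=]; rewrite -!ltnNge => /leq_trans->.
by apply: contraTT (below b') => /[!negb_imply] /andP[-> /=]; rewrite -!leqNgt => /leq_trans->.
Qed.

Lemma eq_admissible (m1 m2 : box lam -> nat) b M :
  (forall b', inth mu b' -> m1 b' = m2 b') -> admissible m1 b M = admissible m2 b M.
Proof.
move=> eq_m; congr (_ && _); apply: eq_forallb => b';
  by case: (boolP (inth mu b')) => //= ib'; rewrite eq_m.
Qed.

Lemma is_SVT_admissible T : is_SVT mu T =
  [forall b, (T b != set0) == inth mu b] &&
  [forall b, inth mu b ==> admissible (fun b => smin (T b)) b (smax (T b))].
Proof.
rewrite /is_SVT -andbA; congr (_ && _).
apply/andP/forallP => [[/forallP right /forallP below] b | adm].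
  apply/implyP => ib; apply/andP; split; apply/forallP => b'; apply/implyP => cond.
    by have /forallP/(_ b')/implyP := right b; apply; rewrite ib !andbA in cond *.
  by have /forallP/(_ b')/implyP := below b; apply; rewrite ib !andbA in cond *.
split; apply/forallP => b; apply/forallP => b'; apply/implyP => /andP[/andP[/andP[ib ib'] e1] e2];
  have /implyP/(_ ib)/andP[/forallP right /forallP below] := adm b.
  by have /implyP := right b'; apply; rewrite ib' e1 e2.
by have /implyP := below b'; apply; rewrite ib' e1 e2.
Qed.

(* Outside theta the minima map is normalised to the dummy value [x0], so that
   every tableau has exactly one minima map. *)
Definition box_sets m b : pred {set 'I_n} :=
  [pred S | if inth mu b
            then [&& S != set0, smin S == m b & admissible (fun b => m b : nat) b (smax S)]
            else (S == set0) && (m b == x0)].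

Definition minima T : {ffun box lam -> 'I_n} :=
  [ffun b => if inth mu b then insubd x0 (smin (T b)) else x0].

Lemma minimaE T b : inth mu b -> T b != set0 -> (minima T b : nat) = smin (T b).
Proof. by move=> ib Tb_neq0; rewrite ffunE ib val_insubd smin_lt. Qed.

Lemma family_box_sets m T :
  (T \in family (box_sets m)) = is_SVT mu T && (m == minima T).
Proof.
rewrite is_SVT_admissible -andbA.
apply/familyP/and3P => [T_in | [/forallP T_neq0 /forallP adm /eqP->] b]; last first.
  rewrite inE; have := T_neq0 b; case: (boolP (inth mu b)) => ib /eqP Tb_neq0.
    rewrite Tb_neq0 minimaE // eqxx /=.
    rewrite (eq_admissible (m2 := fun b => smin (T b))) ?(implyP (adm b) ib) //.
    by move=> b' ib'; apply: minimaE => //; rewrite (eqP (T_neq0 b')).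
  by rewrite ffunE (negbTE ib) eqxx andbT; apply: negbFE.
have T_spec b : T b \in box_sets m b := T_in b.
have m_min b : inth mu b -> smin (T b) = m b.
  by move=> ib; have := T_spec b; rewrite inE ib => /and3P[_ /eqP].
have T_neq0 b : inth mu b -> T b != set0.
  by move=> ib; have := T_spec b; rewrite inE ib => /and3P[].
split.
- apply/forallP => b; case: (boolP (inth mu b)) => [/T_neq0 -> // | ib].
  by have := T_spec b; rewrite inE (negbTE ib) => /andP[/eqP-> _]; rewrite eqxx.
- apply/forallP => b; apply/implyP => ib; rewrite (eq_admissible _ _ m_min).
  by have := T_spec b; rewrite inE ib => /and3P[].
apply/eqP/ffunP => b; case: (boolP (inth mu b)) => ib.
  by apply: ord_inj; rewrite minimaE ?T_neq0 // m_min.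
by have := T_spec b; rewrite inE ffunE (negbTE ib) => /andP[_ /eqP].
Qed.

Definition max_admissible m b : bool :=
  let adm := admissible (fun b => m b : nat) b in
  if inth mu b then adm (m b) && ~~ (((m b).+1 < n)%N && adm (m b).+1) else m b == x0.

Lemma sum_SVT_sign_minima (R : pzRingType) :
  \sum_(T : filling n lam | is_SVT mu T) \prod_b (-1) ^+ (#|T b| - inth mu b)
  = \sum_m [forall b, max_admissible m b]%:R :> R.
Proof.
transitivity (\sum_m \sum_(T in family (box_sets m)) \prod_b (-1) ^+ (#|T b| - inth mu b) : R).
  rewrite (exchange_big_dep xpredT) //= [LHS]big_mkcond; apply: eq_bigr => T _.
  rewrite (eq_bigl _ _ (family_box_sets^~ T)).
  by case: (is_SVT mu T); [rewrite big_pred1_eq | rewrite big_pred0].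
apply: eq_bigr => m _.
rewrite -(bigA_distr_big_dep _ (fun b (S : {set 'I_n}) => (-1) ^+ (#|S| - inth mu b) : R)).
rewrite -prodr_natb; apply: eq_bigr => b _.
rewrite /max_admissible; case: (boolP (inth mu b)) => ib /=.
  rewrite -(sum_sets_min_sign (m b) (@admissible_down _ b)).
  by apply: eq_bigl => S; rewrite /box_sets /= ib.
case: (eqVneq (m b) x0) => [mb_x0 | mb_neq].
  rewrite (eq_bigl (pred1 set0)) ?big_pred1_eq ?cards0 //.
  by move=> S; rewrite /box_sets /= (negbTE ib) mb_x0 eqxx andbT.
by rewrite big_pred0 // => S; rewrite /box_sets /= (negbTE ib) (negbTE mb_neq) andbF.
Qed.
End Minima.

Section DepthMinima.
Variables (n : nat) (lam mu : seq nat) (x0 : 'I_n).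
Hypotheses (lam_part : is_partition lam) (mu_part : is_partition mu).
Hypothesis col_le : forall j, (col_count lam mu j <= n)%N.
Implicit Types (m : {ffun box lam -> 'I_n}) (b : box lam).

Definition depth_value b : nat := (n.-1 - col_depth lam mu b.1 b.2)%N.

Definition depth_minima : {ffun box lam -> 'I_n} :=
  [ffun b => if inth mu b then insubd x0 (depth_value b) else x0].

Lemma depth_minimaE b : inth mu b -> (depth_minima b : nat) = depth_value b.
Proof.
move=> ib; rewrite ffunE ib val_insubd /depth_value.
by have := ltn_ord x0; case: ifP => //; lia.
Qed.

Definition agrees_southeast (m : box lam -> nat) b : Prop :=
  forall b', inth mu b' -> (b.1 <= b'.1)%N -> (b.2 <= b'.2)%N -> b' != b ->
  m b' = depth_value b'.

Lemma admissible_depth (m : box lam -> nat) b M : inth mu b -> agrees_southeast m b ->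
  (M < n)%N -> admissible mu m b M = (M <= depth_value b)%N.
Proof.
move=> ib m_se lt_Mn; have lt_dn := col_depth_lt col_le ib.
have box_neq b' : ((b'.1 : nat) != b.1) || ((b'.2 : nat) != b.2) -> b' != b.
  by apply: contraL => /eqP->; rewrite !eqxx.
have right_ge b' : inth mu b' -> (b'.1 : nat) = b.1 -> (b'.2 : nat) = b.2.+1 ->
    (depth_value b <= m b')%N.
  move=> ib' e1 e2; rewrite m_se ?e1 ?e2 ?leqnSn //; last first.
    by apply: box_neq; rewrite e2 (gtn_eqF (ltnSn _)) orbT.
  by have := col_depth_right lam_part mu_part ib; rewrite /depth_value e1 e2; lia.
have [below_in | below_out] := boolP (inskew lam mu b.1.+1 b.2); last first.
  have depth0 := col_depth_bottom lam_part mu_part ib below_out.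
  rewrite /depth_value depth0 (_ : (M <= n.-1 - 0)%N = true); last by lia.
  apply/andP; split; apply/forallP => b'; apply/implyP => /andP[/andP[ib' /eqP e1] /eqP e2].
    by apply: leq_trans (right_ge b' ib' e1 e2); rewrite /depth_value depth0; lia.
  by move: ib'; rewrite /inth e1 e2 (negbTE below_out).
have [c [c1 c2 ic]] := box_of_inskew below_in.
have mc : m c = (depth_value b).+1.
  rewrite m_se ?c1 ?c2 ?leqnSn //; last by apply: box_neq; rewrite c1 (gtn_eqF (ltnSn _)).
  by have := lt_dn; rewrite /depth_value col_depthS below_in c1 c2 /=; lia.
apply/andP/idP => [[_ /forallP/(_ c)] | le_M].
  by rewrite ic c1 c2 !eqxx mc.
split; apply/forallP => b'; apply/implyP => /andP[/andP[ib' /eqP e1] /eqP e2].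
  exact: leq_trans le_M (right_ge b' ib' e1 e2).
suff -> : b' = c by rewrite mc.
by apply: box_eq; rewrite ?e1 ?e2 ?c1 ?c2.
Qed.

Lemma max_admissible_depth m b : inth mu b -> agrees_southeast (fun b => m b : nat) b ->
  max_admissible mu x0 m b = (m b == depth_value b :> nat).
Proof.
move=> ib m_se; rewrite /max_admissible ib (admissible_depth (M := m b)) ?ltn_ord //.
have lt_mn := ltn_ord (m b); rewrite /depth_value.
have [lt_m1n | ge_m1n] := ltnP (m b).+1 n; last by rewrite andbT; apply/idP/idP; lia.
by rewrite admissible_depth //= /depth_value -leqNgt -eqn_leq.
Qed.

Lemma max_admissible_depth_minima b : max_admissible mu x0 depth_minima b.
Proof.
have [ib | ib] := boolP (inth mu b); last first.
  by rewrite /max_admissible (negbTE ib) ffunE (negbTE ib).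
rewrite max_admissible_depth ?depth_minimaE // => b' ib' _ _ _; exact: depth_minimaE.
Qed.

Lemma max_admissible_uniq m : (forall b, max_admissible mu x0 m b) -> m = depth_minima.
Proof.
move=> m_max.
pose weight (b : box lam) := (size lam - b.1 + (\max_(k <- lam) k - b.2))%N.
have m_depth k b : (weight b < k)%N -> inth mu b -> (m b : nat) = depth_value b.
  elim: k b => // k IH b lt_bk ib; apply/eqP; rewrite -max_admissible_depth //.
  move=> b' ib' le1 le2 neq; apply: IH ib'.
  have : ((b'.1 : nat) != b.1) || ((b'.2 : nat) != b.2).
    apply: contraTT neq => /norP[/negbNE/eqP e1 /negbNE/eqP e2].
    by rewrite negbK (box_eq e1 e2).
  by move: lt_bk le1 le2 (ltn_ord b'.1) (ltn_ord b'.2); rewrite /weight; lia.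
apply/ffunP => b; have [ib | ib] := boolP (inth mu b).
  by apply: ord_inj; rewrite depth_minimaE // (m_depth _ b (ltnSn _) ib).
by have := m_max b; rewrite /max_admissible ffunE (negbTE ib) => /eqP.
Qed.

Lemma sum_max_admissible (R : pzRingType) :
  \sum_(m : {ffun box lam -> 'I_n}) [forall b, max_admissible mu x0 m b]%:R = 1 :> R.
Proof.
rewrite (bigD1 depth_minima) //= (introT forallP max_admissible_depth_minima).
rewrite big1 ?addr0 // => m m_neq.
by case: forallP => // /max_admissible_uniq m_eq; rewrite m_eq eqxx in m_neq.
Qed.
End DepthMinima.

Section Sizes.
Variables (n : nat) (lam mu : seq nat).
Implicit Types (T : filling n lam).

Lemma sum_omega T : (\sum_(k : 'I_n) omega T k)%N = Defs.tsize T.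
Proof.
rewrite /Defs.tsize (eq_bigr (fun b => \sum_(k : 'I_n) ((k \in T b) : nat))%N); last first.
  by move=> b _; rewrite -sum1_card big_mkcond.
rewrite exchange_big; apply: eq_bigr => k _.
by rewrite /omega -sum1_card big_mkcond; apply: eq_bigr => b _; rewrite inE.
Qed.

Lemma skew_sizeE : skew_size lam mu = (\sum_(b : box lam) inth mu b)%N.
Proof.
by rewrite /skew_size -sum1_card big_mkcond; apply: eq_bigr => b _; rewrite inE.
Qed.

Lemma tsize_SVT T : is_SVT mu T ->
  Defs.tsize T = (skew_size lam mu + \sum_b (#|T b| - inth mu b))%N.
Proof.
case/andP=> /andP[/forallP T_neq0 _] _.
rewrite skew_sizeE /Defs.tsize -big_split; apply: eq_bigr => b _ /=.
by rewrite subnKC //; have := T_neq0 b; case: (inth mu b) => // /eqP; rewrite card_gt0.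
Qed.
End Sizes.

Lemma sum_SVT_sign (R : pzRingType) n lam mu : (0 < n)%N ->
  is_partition lam -> is_partition mu -> (forall j, (col_count lam mu j <= n)%N) ->
  \sum_(T : filling n lam | is_SVT mu T) (-1) ^+ (Defs.tsize T - skew_size lam mu) = 1 :> R.
Proof.
move=> n_gt0 lam_part mu_part col_le.
rewrite -[RHS](sum_max_admissible (Ordinal n_gt0) lam_part mu_part col_le).
rewrite -sum_SVT_sign_minima.
by apply: eq_bigr => T /tsize_SVT->; rewrite addKn -prodrXr.
Qed.

Lemma Groth_const_neg_inv (F : fieldType) n lam mu (x : F) : x != 0 ->
  @Groth F n lam mu (fun=> x) (- x^-1)
  = x ^+ skew_size lam mu *
    \sum_(T : filling n lam | is_SVT mu T) (-1) ^+ (Defs.tsize T - skew_size lam mu).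
Proof.
move=> x_neq0; rewrite /Groth mulr_sumr; apply: eq_bigr => T /tsize_SVT tsizeE.
rewrite prodrXr sum_omega tsizeE addKn exprD mulrCA -exprMn mulNr mulVf //.
Qed.

Theorem theoremB1 (R : realType) (n : nat) (lam mu : seq nat) (beta : R[i]) :
  (0 < n)%N ->
  is_partition lam -> is_partition mu -> subpartition mu lam ->
  (forall j : nat, (col_count lam mu j <= n)%N) ->
  beta != 0 ->
  @Groth _ n lam mu (fun _ => beta) (- beta^-1) = beta ^+ skew_size lam mu.
Proof.
move=> n_gt0 lam_part mu_part _ col_le beta_neq0.
by rewrite Groth_const_neg_inv // sum_SVT_sign // mulr1.
Qed.
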